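(* Let $X$ be a finite q-cycle set. Then $X$ is irreducible if and only if $\langle x\rangle=X$ for all $x\in X$.
   Context: A q-cycle set is a non-empty set $X$ with operations $\cdot,:$ such that each $y\mapsto x\cdot y$ is bijective and $(x\cdot y)\cdot(x\cdot z)=(y:x)\cdot(y\cdot z)$, $(x:y):(x:z)=(y\cdot x):(y:z)$, $(x\cdot y):(x\cdot z)=(y:x)\cdot(y:z)$ for all $x,y,z$. A sub-q-cycle set is a subset that is a q-cycle set under the restricted operations (the empty set also counts); $\langle x\rangle$ is the smallest sub-q-cycle set containing $x$. $X$ is irreducible if $\emptyset$ and $X$ are its only sub-q-cycle sets. *)

From mathcomp Require Import all_boot.
Set Implicit Arguments. Unset Strict Implicit. Unset Printing Implicit Defensive.

Definition is_qcycle_set (T : finType) (dot colon : T -> T -> T) : Prop :=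
  [/\ 0 < #|T|,
      (forall x, bijective (dot x)),
      (forall x y z, dot (dot x y) (dot x z) = dot (colon y x) (dot y z)),
      (forall x y z, colon (colon x y) (colon x z) = colon (dot y x) (colon y z)) &
      (forall x y z, colon (dot x y) (dot x z) = dot (colon y x) (colon y z))].

(* The three identities
   are inherited from T.  The empty set qualifies (no non-emptiness demanded). *)
Definition is_sub_qcs (T : finType) (dot colon : T -> T -> T) (S : {set T}) : bool :=
  [&& [forall x in S, forall y in S, dot x y \in S],
      [forall x in S, forall y in S, colon x y \in S],
      [forall x in S, forall y in S, forall z in S, (dot x y == dot x z) ==> (y == z)] &
      [forall x in S, forall z in S, exists y in S, dot x y == z]].

Definition qcs_gen (T : finType) (dot colon : T -> T -> T) (x : T) : {set T} :=
  \bigcap_(S : {set T} | is_sub_qcs dot colon S && (x \in S)) S.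

Definition qcs_irreducible (T : finType) (dot colon : T -> T -> T) : Prop :=
  forall S : {set T}, is_sub_qcs dot colon S -> S = set0 \/ S = setT.

From mathcomp Require Import all_boot.

(* Only the lattice of sub-q-cycle sets matters: [<x>] is the least of them
   containing [x], so every nonempty one contains some [<x>]. *)

Section Generated.

Variables (T : finType) (dot colon : T -> T -> T).

Lemma qcs_gen_min (S : {set T}) (x : T) :
  is_sub_qcs dot colon S -> x \in S -> qcs_gen dot colon x \subset S.
Proof. by move=> subS xS; apply: bigcap_inf; rewrite subS xS. Qed.

Lemma qcs_irreducible_gen (x : T) :
  qcs_irreducible dot colon -> qcs_gen dot colon x = setT.
Proof.
move=> irrT; apply: big1 => S /andP[subS xS].
by case: (irrT S subS) => // S0; rewrite S0 inE in xS.
Qed.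

Lemma qcs_gen_irreducible :
  (forall x : T, qcs_gen dot colon x = setT) -> qcs_irreducible dot colon.
Proof.
move=> genT S subS; have [-> | [x xS]] := set_0Vmem S; first by left.
by right; apply/eqP; rewrite eqEsubset subsetT -(genT x) qcs_gen_min.
Qed.

End Generated.

Theorem mainTheorem13 (T : finType) (dot colon : T -> T -> T) :
  is_qcycle_set dot colon ->
  (qcs_irreducible dot colon <-> forall x : T, qcs_gen dot colon x = setT).
Proof.
move=> _; split; first by move=> irrT x; apply: qcs_irreducible_gen.
exact: qcs_gen_irreducible.
Qed.
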